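(* For each integer $d\ge1$, with $[d]=\{1,\dots,d\}$, we have $|\mathcal Q_{[d]}|=\prod_{j=1}^d j!$.
   Context: For a finite set $J$ of non-negative integers, $\mathcal Q_J$ is the set of polynomials $\sum_{j\in J}t_jx^j$ with all $t_j\in(-1/2,1/2]$ such that $\sum_{j\in J}t_jm^j\in\mathbb Z$ for all $m\in\mathbb Z$. *)

From mathcomp Require Import all_boot all_order all_algebra.
From mathcomp Require Import reals.
Set Implicit Arguments. Unset Strict Implicit. Unset Printing Implicit Defensive.
Import Order.TTheory GRing.Theory Num.Theory.
Local Open Scope ring_scope.

Definition inQ (R : realType) (J : seq nat) (p : {poly R}) : Prop :=
  (forall j : nat, j \notin J -> p`_j = 0) /\
  (forall j : nat, j \in J -> - (1 / 2) < p`_j /\ p`_j <= 1 / 2) /\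
  (forall m : int, p.[m%:~R] \is a Num.int).

From mathcomp Require Import all_boot all_order all_algebra.
From mathcomp Require Import reals.
From mathcomp Require Import ring lra zify.
Set Implicit Arguments. Unset Strict Implicit. Unset Printing Implicit Defensive.
Import Order.TTheory GRing.Theory Num.Theory.
Local Open Scope ring_scope.

(* Write x^(k) = x (x - 1) ... (x - k + 1) for the falling factorial.  A
   polynomial of degree <= d taking integer values at 0, 1, ..., d is a
   Newton sum  sum_(k <= d) (a_k / k!) x^(k)  with integer digits a_k, and
   every such sum is integer-valued on all of Z.  Replacing each a_k by its
   residue modulo k! changes the sum only by an element of Z[x], and two
   sums whose digits lie in [0, k!) agree modulo Z[x] only if their digits
   coincide.  So the classes modulo Z[x] of integer-valued polynomials of
   degree <= d are in bijection with the mixed-radix digit strings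
   (c_0, ..., c_d), 0 <= c_k < k!, of which there are prod_(k <= d) k!.
   Reducing every coefficient to its centred representative in (-1/2, 1/2]
   picks one polynomial in each class, keeps integer values, and forces the
   constant term c_0 = 0; the reduced sums are exactly the elements of Q_[d]. *)

Notation Zpoly := (polyOver Num.int_num_subdef).

Fixpoint box (n : nat) : seq (seq nat) :=
  if n is n'.+1 then [seq rcons c r | c <- box n', r <- iota 0 n'`!]
  else [:: [::]].

Lemma size_box n : size (box n) = (\prod_(k < n) k`!)%N.
Proof.
elim: n => [|n IH]; first by rewrite big_ord0.
by rewrite /= size_allpairs IH size_iota big_ord_recr.
Qed.

Lemma uniq_box n : uniq (box n).
Proof.
elim: n => [|n IH] //=.
rewrite allpairs_uniq ?iota_uniq // => [[c r] [c' r']] _ _ /= /eqP.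
by rewrite eqseq_rcons => /andP[/eqP -> /eqP ->].
Qed.

Lemma mem_box n c :
  c \in box n <-> size c = n /\ (forall k, (k < n)%N -> (nth 0%N c k < k`!)%N).
Proof.
elim: n c => [|n IH] c.
  by rewrite inE; split=> [/eqP -> | [/size0nil ->]].
split.
  case/allpairsP=> -[c0 r] /= [/IH[size_c0 small_c0]]; rewrite mem_iota => r_lt ->.
  rewrite size_rcons size_c0; split=> // k; rewrite ltnS leq_eqVlt nth_rcons size_c0.
  by case/orP=> [/eqP -> | k_lt]; rewrite ?ltnn ?eqxx // k_lt small_c0.
case/lastP: c => [[] //|c r]; rewrite size_rcons => -[[size_c] small].
apply/allpairsP; exists (c, r); split => //=.
  apply/IH; split=> // k k_lt; have := small k (ltnW k_lt).
  by rewrite nth_rcons size_c k_lt.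
by rewrite mem_iota /=; have := small n (ltnSn n); rewrite nth_rcons size_c ltnn eqxx.
Qed.

Section IntegerValuedPolynomials.
Variable R : archiRealFieldType.

Lemma eq_residues (x y F : int) :
  0 <= x < F -> 0 <= y < F -> ((x - y)%:~R / F%:~R : R) \is a Num.int -> x = y.
Proof.
move=> /andP[x_ge0 x_lt] /andP[y_ge0 y_lt] /intrP[z xy_z].
have F_neq0 : (F%:~R : R) != 0 by rewrite intr_eq0 gt_eqF // (le_lt_trans x_ge0).
have xE : x = z * F + y.
  by apply: (@intr_inj R); rewrite intrD intrM -xy_z mulfVK // intrB subrK.
by rewrite -(modz_small (m := x) (d := F)) ?x_ge0 // xE modzMDl modz_small ?y_ge0.
Qed.

Definition cfrac (x : R) : R := x - (Num.ceil (x - 1/2))%:~R.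

Lemma cfrac_itv (x : R) : -(1/2) < cfrac x <= 1/2.
Proof.
have /andP[lo hi] := ceil_itv (x - 1/2).
rewrite intrB in lo; rewrite /cfrac; set c := (Num.ceil _)%:~R in lo hi *.
by apply/andP; split; lra.
Qed.

Lemma cfrac_id (x : R) : -(1/2) < x <= 1/2 -> cfrac x = x.
Proof.
move=> /andP[lo hi]; rewrite /cfrac (@ceil_def _ _ 0) ?subr0 //.
by rewrite intrB /=; apply/andP; split; lra.
Qed.

Lemma cfrac0 : cfrac 0 = 0.
Proof. by apply: cfrac_id; apply/andP; split; lra. Qed.

Lemma cfrac_sub (x : R) : x - cfrac x \is a Num.int.
Proof. by rewrite /cfrac opprB addrC subrK intr_int. Qed.

Lemma cfrac_shift (x y : R) : x - y \is a Num.int -> cfrac x = cfrac y.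
Proof.
move=> /intrP[m xy]; have -> : x = y + m%:~R by rewrite -xy; ring.
rewrite /cfrac (_ : y + m%:~R - 1/2 = (y - 1/2) + m%:~R); last by ring.
by rewrite ceilDrz ?intr_int // intrKceil intrD; ring.
Qed.

Definition reduce (p : {poly R}) : {poly R} := \poly_(i < size p) cfrac p`_i.

Lemma coef_reduce (p : {poly R}) i : (reduce p)`_i = cfrac p`_i.
Proof. by rewrite coef_poly; case: ltnP => // /(nth_default 0) ->; rewrite cfrac0. Qed.

Lemma reduce_sub (p : {poly R}) : p - reduce p \is a Zpoly.
Proof. by apply/polyOverP => i; rewrite coefB coef_reduce cfrac_sub. Qed.

Lemma reduce_id (p : {poly R}) : (forall i, -(1/2) < p`_i <= 1/2) -> reduce p = p.
Proof. by move=> small; apply/polyP => i; rewrite coef_reduce cfrac_id. Qed.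

Lemma reduceP (p q : {poly R}) : reduce p = reduce q <-> p - q \is a Zpoly.
Proof.
split=> [pq | /polyOverP pq].
  have -> : p - q = (p - reduce p) - (q - reduce q) by rewrite pq; ring.
  by rewrite rpredB ?reduce_sub.
by apply/polyP => i; rewrite !coef_reduce; apply: cfrac_shift; rewrite -coefB.
Qed.

Lemma fact_neq0 k : (k`!%:R : R) != 0.
Proof. by rewrite pnatr_eq0 -lt0n fact_gt0. Qed.

Definition ffpoly (k : nat) : {poly R} := \prod_(i < k) ('X - i%:R%:P).

Lemma ffpoly_Zpoly k : ffpoly k \is a Zpoly.
Proof. by apply: rpred_prod => i _; rewrite polyOverXsubC natr_int. Qed.

Lemma size_ffpoly k : size (ffpoly k) = k.+1.
Proof. by rewrite size_prod_XsubC /index_enum unlock /= -enumT size_enum_ord. Qed.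

Lemma coef_ffpoly_top k : (ffpoly k)`_k = 1.
Proof.
have /monicP := monic_prod_XsubC (index_enum 'I_k) xpredT (fun i => i%:R : R).
by rewrite /lead_coef -/(ffpoly k) size_ffpoly.
Qed.

Lemma horner_ffpoly k (x : R) : (ffpoly k).[x] = \prod_(i < k) (x - i%:R).
Proof. by rewrite horner_prod; apply: eq_bigr => i _; rewrite hornerXsubC. Qed.

Lemma ffpoly_nat k n : (ffpoly k).[n%:R] = (n ^_ k)%:R.
Proof.
rewrite horner_ffpoly; have [k_le | n_lt] := leqP k n.
  rewrite ffact_prod natr_prod; apply: eq_bigr => i _.
  by rewrite natrB // ltnW // (leq_trans (ltn_ord i) k_le).
by rewrite ffact_small // (bigD1 (Ordinal n_lt)) //= subrr mul0r.
Qed.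

Lemma ffpoly_negnat k n : (ffpoly k).[- n%:R] = (-1) ^+ k * ((n + k).-1 ^_ k)%:R.
Proof.
rewrite horner_ffpoly.
have -> : \prod_(i < k) (- n%:R - i%:R) = \prod_(i < k) (-1 * (n + i)%:R :> R).
  by apply: eq_bigr => i _; rewrite natrD; ring.
rewrite big_split /= prodr_const card_ord ffact_prod natr_prod.
rewrite [in RHS](reindex_inj rev_ord_inj) /=; congr (_ * _).
by apply: eq_bigr => i _; congr (_%:R); have := ltn_ord i; lia.
Qed.

Lemma binpoly_int k (m : int) : (ffpoly k).[m%:~R] / k`!%:R \is a Num.int.
Proof.
case: m => n; first by rewrite -pmulrn ffpoly_nat -bin_ffact natrM mulfK ?fact_neq0 ?natr_int.
rewrite NegzE mulrNz -pmulrn ffpoly_negnat -bin_ffact natrM mulrA mulfK ?fact_neq0 //.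
by rewrite rpredM ?rpredX ?rpredN ?rpred1 ?natr_int.
Qed.

Definition newton (a : nat -> int) (n : nat) : {poly R} :=
  \sum_(k < n) ((a k)%:~R / k`!%:R) *: ffpoly k.

Lemma newtonS a n : newton a n.+1 = newton a n + ((a n)%:~R / n`!%:R) *: ffpoly n.
Proof. by rewrite /newton big_ord_recr. Qed.

Lemma eq_newton a b n : (forall k, (k < n)%N -> a k = b k) -> newton a n = newton b n.
Proof. by move=> ab; apply: eq_bigr => k _; rewrite ab. Qed.

Lemma newton_nat a n j : (newton a n).[j%:R] = \sum_(k < n) (a k)%:~R * 'C(j, k)%:R.
Proof.
rewrite horner_sum; apply: eq_bigr => k _.
by rewrite hornerZ ffpoly_nat -bin_ffact natrM mulrAC mulrA mulfK ?fact_neq0.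
Qed.

Lemma newton_int a n (m : int) : (newton a n).[m%:~R] \is a Num.int.
Proof.
rewrite horner_sum rpred_sum // => k _.
by rewrite hornerZ mulrAC -mulrA rpredM ?intr_int ?binpoly_int.
Qed.

Lemma coef_newton_ge a n i : (n <= i)%N -> (newton a n)`_i = 0.
Proof.
move=> n_le; rewrite coef_sum big1 // => k _.
by rewrite coefZ nth_default ?mulr0 // size_ffpoly (leq_trans (ltn_ord k)).
Qed.

Lemma coef_newton_top a n : (newton a n.+1)`_n = (a n)%:~R / n`!%:R.
Proof. by rewrite newtonS coefD coefZ coef_newton_ge // coef_ffpoly_top add0r mulr1. Qed.

Lemma coef0_newton a n : (newton a n.+1)`_0 = (a 0%N)%:~R.
Proof.
rewrite -horner_coef0 -[0 : R]/(0%:R) newton_nat big_ord_recl bin0 mulr1 big1 ?addr0 //.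
by move=> k _; rewrite bin0n mulr0.
Qed.

(* A polynomial taking integer values at 0, ..., N-1 agrees there with a
   Newton sum with N integer digits (choose the digits one at a time). *)
Lemma newton_interpolate (p : {poly R}) N :
  (forall j : nat, p.[j%:R] \is a Num.int) ->
  exists a, forall j, (j < N)%N -> p.[j%:R] = (newton a N).[j%:R].
Proof.
move=> p_int; elim: N => [|N [a p_eq]]; first by exists (fun=> 0).
have /intrP[v v_eq] : p.[N%:R] - (newton a N).[N%:R] \is a Num.int.
  by rewrite rpredB // -[N%:R]/(N%:Z%:~R) newton_int.
exists (fun k => if k == N then v else a k) => j; rewrite newtonS eqxx.
rewrite (@eq_newton _ a) => [|k k_lt]; last by rewrite ifN // neq_ltn k_lt.
rewrite hornerD hornerZ ffpoly_nat ltnS leq_eqVlt => /orP[/eqP -> | j_lt].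
  by rewrite ffactnn -v_eq mulrAC mulfK ?fact_neq0 //; ring.
by rewrite ffact_small // mulr0 addr0 p_eq.
Qed.

Lemma newton_expansion (p : {poly R}) n : (size p <= n)%N ->
  (forall j : nat, p.[j%:R] \is a Num.int) -> exists a, p = newton a n.
Proof.
move=> p_size p_int; have [a p_eq] := newton_interpolate n p_int; exists a.
apply/eqP; rewrite -subr_eq0; apply/eqP.
apply: (@roots_geq_poly_eq0 _ _ [seq j%:R | j <- iota 0 n]).
- apply/allP => x /mapP[j]; rewrite mem_iota => /andP[_ j_lt] ->.
  by rewrite /root hornerD hornerN p_eq // subrr.
- by rewrite map_inj_uniq ?iota_uniq // => i j /eqP; rewrite eqr_nat => /eqP.
rewrite size_map size_iota; apply/leq_sizeP => i n_le.
by rewrite coefB coef_newton_ge // subr0 nth_default // (leq_trans p_size).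
Qed.

(* Digits in the mixed radix 0!, 1!, 2!, ... are determined by the Newton
   sum modulo Z[x]: compare top coefficients and induct. *)
Lemma newton_digits_unique a b n :
  (forall k, (k < n)%N -> 0 <= a k < k`!%:Z) ->
  (forall k, (k < n)%N -> 0 <= b k < k`!%:Z) ->
  newton a n - newton b n \is a Zpoly -> forall k, (k < n)%N -> a k = b k.
Proof.
elim: n => [// | n IH] a_small b_small ab_Z.
have top : a n = b n.
  apply: eq_residues; [exact: a_small | exact: b_small |].
  have /polyOverP/(_ n) := ab_Z.
  by rewrite coefB !coef_newton_top -mulrBl -intrB -pmulrn.
move: ab_Z; rewrite !newtonS top opprD addrACA subrr addr0 => ab_Z k.
rewrite ltnS leq_eqVlt => /orP[/eqP -> // | k_lt].
by apply: IH => // [i i_lt | i i_lt]; [apply: a_small | apply: b_small]; exact: ltnW.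
Qed.

Definition digit_poly (c : seq nat) : {poly R} :=
  newton (fun k => (nth 0%N c k)%:Z) (size c).

Definition digits (a : nat -> int) (n : nat) : seq nat :=
  [seq `|(a k %% k`!%:Z)%Z|%N | k <- iota 0 n].

Lemma nth_digits a n k : (k < n)%N -> (nth 0%N (digits a n) k)%:Z = (a k %% k`!%:Z)%Z.
Proof.
move=> k_lt; rewrite (nth_map 0%N) ?size_iota // nth_iota // add0n gez0_abs //.
by rewrite modz_ge0 // eqz_nat -lt0n fact_gt0.
Qed.

Lemma digits_box a n : digits a n \in box n.
Proof.
apply/mem_box; split=> [|k k_lt]; first by rewrite size_map size_iota.
have fact_pos : 0 < k`!%:Z by rewrite ltz_nat fact_gt0.
by have := ltz_pmod (a k) fact_pos; rewrite -(nth_digits a k_lt) ltz_nat.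
Qed.

(* Replacing the digits of a Newton sum by their residues changes it only by
   the integral polynomial sum_k (a_k div k!) x^(k). *)
Lemma newton_digits a n : newton a n - digit_poly (digits a n) \is a Zpoly.
Proof.
have -> : digit_poly (digits a n) = newton (fun k => a k %% k`!%:Z)%Z n.
  by rewrite /digit_poly size_map size_iota; apply: eq_newton => k /nth_digits->.
rewrite /newton -sumrB rpred_sum // => k _; rewrite -scalerBl -mulrBl.
rewrite {1}(divz_eq (a k) k`!%:Z) intrD addrK intrM -pmulrn mulfK ?fact_neq0 //.
by apply: polyOverZ; [exact: intr_int | exact: ffpoly_Zpoly].
Qed.
End IntegerValuedPolynomials.

Arguments reduce {R} p.
Arguments newton {R} a n.
Arguments digit_poly {R} c.

Section CountingQ.
Variable R : realType.

Definition qpoly (c : seq nat) : {poly R} := reduce (digit_poly c).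

(* Each reduced Newton sum of a digit string of length d+1 lies in Q_[d]:
   the digit bound c_0 < 0! = 1 kills the constant term. *)
Lemma qpoly_inQ d c : c \in box d.+1 -> inQ (iota 1 d) (qpoly c).
Proof.
case/mem_box => size_c small_c; split; [|split].
- move=> j; rewrite /qpoly coef_reduce /digit_poly size_c mem_iota.
  case: j => [_ | j]; last first.
    by rewrite ltnS negb_and /= -ltnNge => d_lt; rewrite coef_newton_ge ?cfrac0.
  have := small_c 0%N isT; rewrite fact0 ltnS leqn0 => /eqP c0.
  by rewrite coef0_newton c0 cfrac0.
- by move=> j _; apply/andP; rewrite coef_reduce cfrac_itv.
move=> m; have -> : qpoly c = digit_poly c - (digit_poly c - qpoly c) by ring.
rewrite hornerD hornerN rpredB ?newton_int //.
by apply: rpred_horner; [exact: reduce_sub | exact: intr_int].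
Qed.

(* Conversely every element of Q_[d] is its own reduction, hence the
   reduction of the Newton sum of its residue digits. *)
Lemma inQ_qpoly d p : inQ (iota 1 d) p -> exists2 c, c \in box d.+1 & p = qpoly c.
Proof.
case=> p_zero [p_small p_int].
have p_size : (size p <= d.+1)%N.
  by apply/leq_sizeP => j j_ge; apply: p_zero; rewrite mem_iota; lia.
have p_nat (j : nat) : p.[j%:R] \is a Num.int by exact: (p_int j).
have [a p_eq] := newton_expansion p_size p_nat.
exists (digits a d.+1); first exact: digits_box.
rewrite /qpoly -[LHS]reduce_id => [|i]; first by apply/reduceP; rewrite p_eq newton_digits.
case: (boolP (i \in iota 1 d)) => [/p_small/andP // | /p_zero ->].
by apply/andP; split; lra.
Qed.

Lemma qpoly_inj n : {in box n &, injective qpoly}.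
Proof.
move=> c c' /mem_box[size_c small_c] /mem_box[size_c' small_c'] /reduceP.
rewrite /digit_poly size_c size_c' => cc'_Z.
have digit_range (e : seq nat) : (forall k, (k < n)%N -> (nth 0%N e k < k`!)%N) ->
    forall k, (k < n)%N -> 0 <= (nth 0%N e k)%:Z < k`!%:Z.
  by move=> small k /small; rewrite ltz_nat.
have := newton_digits_unique (digit_range _ small_c) (digit_range _ small_c') cc'_Z.
move=> digits_eq; apply: (@eq_from_nth _ 0%N) => [|k]; first by rewrite size_c size_c'.
by rewrite size_c => /digits_eq [].
Qed.
End CountingQ.

Theorem mainTheorem14 (R : realType) (d : nat) (hd : (1 <= d)%N) :
  exists s : seq {poly R},
    [/\ uniq s,
        size s = (\prod_(1 <= j < d.+1) j`!)%N &
        forall p : {poly R}, p \in s <-> inQ (iota 1 d) p].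
Proof.
exists [seq qpoly R c | c <- box d.+1]; split.
- by rewrite map_inj_in_uniq ?uniq_box //; exact: qpoly_inj.
- by rewrite size_map size_box -(big_mkord xpredT) big_ltn // fact0 mul1n.
move=> p; split=> [/mapP[c c_box ->] | /inQ_qpoly[c c_box ->]].
  exact: qpoly_inQ.
exact: map_f.
Qed.
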